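(* Let $r,n\geq1$, let $Z_n=\mathbb{C}^{2n}/((\mathbb{Z}/r\mathbb{Z})\wr S_n)$, let $R_n=\mathbb{C}[x_1,\dots,x_n,y_1,\dots,y_n,z_1,\dots,z_n]$ with $S_n$ acting by simultaneously permuting the indices of the $x_i,y_i,z_i$, and let $I_n=(x_1y_1-z_1^r,\dots,x_ny_n-z_n^r)\subset R_n$. Then \[\mathbb{C}[Z_n]\simeq R_n^{S_n}/I_n^{S_n},\] where $I_n^{S_n}=I_n\cap R_n^{S_n}$; more precisely, the natural map $R_n^{S_n}/I_n^{S_n}\to (R_n/I_n)^{S_n}\simeq \mathbb{C}[Z_n]$ is an isomorphism.
   Context: $(\mathbb{Z}/r\mathbb{Z})\wr S_n$ acts on $\mathbb{C}^{2n}$ with coordinates $(X_i,Y_i)_{i=1}^n$: the $i$-th copy of $\mathbb{Z}/r\mathbb{Z}$ acts by $(X_i,Y_i)\mapsto(\zeta X_i,\zeta^{-1}Y_i)$ ($\zeta^r=1$), and $S_n$ permutes the pairs. The identification $\mathbb{C}[Z_n]=\mathbb{C}[X,Y]^{(\mathbb{Z}/r\mathbb{Z})\wr S_n}\simeq (R_n/I_n)^{S_n}$ is given by $x_i\mapsto X_i^r$, $y_i\mapsto Y_i^r$, $z_i\mapsto X_iY_i$. *)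

From HB Require Import structures.
From mathcomp Require Import all_boot all_order all_algebra all_fingroup.
From mathcomp Require Import mpoly.
Set Implicit Arguments. Unset Strict Implicit. Unset Printing Implicit Defensive.
Import Order.TTheory GRing.Theory Num.Theory.
Local Open Scope ring_scope.

(* R_n = C[x_1..x_n, y_1..y_n, z_1..z_n] is {mpoly C[n + n + n]}:
   x_i = 'X_(lshift n (lshift n i)), y_i = 'X_(lshift n (rshift n i)),
   z_i = 'X_(rshift (n + n) i).
   C[X,Y] = C[X_1..X_n, Y_1..Y_n] is {mpoly C[n + n]}:
   X_i = 'X_(lshift n i), Y_i = 'X_(rshift n i). *)

Section Defs.
Variables (C : fieldType) (n : nat).

Definition xv (i : 'I_n) : {mpoly C[n + n + n]} := 'X_(lshift n (lshift n i)).
Definition yv (i : 'I_n) : {mpoly C[n + n + n]} := 'X_(lshift n (rshift n i)).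
Definition zv (i : 'I_n) : {mpoly C[n + n + n]} := 'X_(rshift (n + n) i).

Definition Xv (i : 'I_n) : {mpoly C[n + n]} := 'X_(lshift n i).
Definition Yv (i : 'I_n) : {mpoly C[n + n]} := 'X_(rshift n i).

Definition subst_xyz (k : nat) (fx fy fz : 'I_n -> {mpoly C[k]})
  (p : {mpoly C[n + n + n]}) : {mpoly C[k]} :=
  p \mPo [tuple match split j with
                | inl j' => match split j' with
                            | inl i => fx i
                            | inr i => fy i
                            end
                | inr i => fz i
                end | j < n + n + n].

Definition subst_XY (k : nat) (fX fY : 'I_n -> {mpoly C[k]})
  (p : {mpoly C[n + n]}) : {mpoly C[k]} :=
  p \mPo [tuple match split j with
                | inl i => fX i
                | inr i => fY i
                end | j < n + n].

Definition perm_act (s : 'S_n) (p : {mpoly C[n + n + n]}) : {mpoly C[n + n + n]} :=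
  subst_xyz (fun i => xv (s i)) (fun i => yv (s i)) (fun i => zv (s i)) p.

Definition Sn_invariant (p : {mpoly C[n + n + n]}) : Prop :=
  forall s : 'S_n, perm_act s p = p.

Definition in_In (r : nat) (p : {mpoly C[n + n + n]}) : Prop :=
  exists c : 'I_n -> {mpoly C[n + n + n]},
    p = \sum_(i < n) c i * (xv i * yv i - zv i ^+ r).

(* Action of the element (a, s) of (Z/rZ) wr S_n (a : 'I_n -> 'I_r, s : 'S_n)
   on C[X,Y]: the i-th copy of Z/rZ acts by (X_i, Y_i) |-> (zeta X_i, zeta^-1 Y_i)
   and S_n permutes the pairs (X_i, Y_i). *)
Definition wreath_act (r : nat) (zeta : C) (a : 'I_n -> 'I_r) (s : 'S_n)
  (p : {mpoly C[n + n]}) : {mpoly C[n + n]} :=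
  subst_XY (fun i => (zeta ^+ a i) *: Xv (s i))
           (fun i => (zeta^-1 ^+ a i) *: Yv (s i)) p.

(* C[X,Y]^{(Z/rZ) wr S_n} = C[Z_n] *)
Definition wreath_invariant (r : nat) (zeta : C) (p : {mpoly C[n + n]}) : Prop :=
  forall (a : 'I_n -> 'I_r) (s : 'S_n), wreath_act zeta a s p = p.

Definition phi (r : nat) (p : {mpoly C[n + n + n]}) : {mpoly C[n + n]} :=
  subst_xyz (fun i => Xv i ^+ r) (fun i => Yv i ^+ r) (fun i => Xv i * Yv i) p.

End Defs.

From HB Require Import structures.
From mathcomp Require Import all_boot all_order all_algebra all_fingroup.
From mathcomp Require Import mpoly ring.
Set Implicit Arguments. Unset Strict Implicit. Unset Printing Implicit Defensive.
Import GRing.Theory Num.Theory.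
Local Open Scope ring_scope.

(* Since zeta^r = 1, phi intertwines the permutation of indices on R_n with
   the action of (a, s) on C[X,Y].  A monomial X^u Y^v is fixed by the torus
   (Z/rZ)^n iff u_i = v_i mod r, and such a monomial is the image of
   x^((u-v)/r) y^((v-u)/r) z^(min(u,v)) (truncated subtractions), so every
   invariant has a preimage, which averaging over S_n makes S_n-invariant.
   Conversely x_i y_i = z_i^r mod I_n reduces every monomial x^a y^b z^c to
   the preimage of its image; this reduction is linear, so phi p = 0 forces
   p = 0 mod I_n. *)

Lemma split_lshift m k (i : 'I_m) : split (lshift k i) = inl i.
Proof. exact: (unsplitK (inl i)). Qed.

Lemma split_rshift m k (i : 'I_k) : split (rshift m i) = inr i.
Proof. exact: (unsplitK (inr i)). Qed.

Lemma comp_mpolyA (R : comRingType) k l N (p : {mpoly R[k]})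
    (t : k.-tuple {mpoly R[l]}) (u : l.-tuple {mpoly R[N]}) :
  p \mPo t \mPo u = p \mPo [tuple tnth t j \mPo u | j < k].
Proof.
have comp_sum m m' (v : m.-tuple {mpoly R[m']}) :=
  big_morph _ (comp_mpolyD v) (comp_mpoly0 v).
rewrite [p]mpolyE (comp_sum _ _ t) (comp_sum _ _ u) comp_sum.
apply: eq_bigr => m _.
rewrite !comp_mpolyZ !comp_mpolyX rmorph_prod; congr (_ *: _).
by apply: eq_bigr => i _; rewrite rmorphXn tnth_mktuple.
Qed.

Section SubstitutionMorphisms.
Variables (C : fieldType) (n k : nat).
Variables (fx fy fz fX fY : 'I_n -> {mpoly C[k]}).

HB.instance Definition _ :=
  GRing.LRMorphism.copy (subst_xyz fx fy fz) (comp_mpoly _).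
HB.instance Definition _ :=
  GRing.LRMorphism.copy (subst_XY fX fY) (comp_mpoly _).

End SubstitutionMorphisms.

HB.instance Definition _ (C : fieldType) (n r : nat) :=
  GRing.LRMorphism.copy (@phi C n r) (subst_xyz _ _ _).
HB.instance Definition _ (C : fieldType) (n : nat) (s : 'S_n) :=
  GRing.LRMorphism.copy (@perm_act C n s) (subst_xyz _ _ _).
HB.instance Definition _ (C : fieldType) (n r : nat) (zeta : C)
    (a : 'I_n -> 'I_r) (s : 'S_n) :=
  GRing.LRMorphism.copy (wreath_act zeta a s) (subst_XY _ _).

Section Substitution.
Variables (C : fieldType) (n : nat).
Local Notation lx i := (lshift n (lshift n i)).
Local Notation ly i := (lshift n (rshift n i)).
Local Notation lz i := (rshift (n + n) i).

Lemma mpolyX_xyz (m : 'X_{1..n + n + n}) : 'X_[m] =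
  \prod_(i < n) (xv C i ^+ m (lx i) * yv C i ^+ m (ly i) * zv C i ^+ m (lz i)).
Proof. by rewrite mpolyXE_id !big_split_ord !big_split. Qed.

Lemma mpolyX_XY (m : 'X_{1..n + n}) : 'X_[m] =
  \prod_(i < n) (Xv C i ^+ m (lshift n i) * Yv C i ^+ m (rshift n i)).
Proof. by rewrite mpolyXE_id big_split_ord big_split. Qed.

Variable k : nat.
Implicit Types (fx fy fz gx gy gz fX fY : 'I_n -> {mpoly C[k]}).

Lemma subst_xyz_x fx fy fz i : subst_xyz fx fy fz (xv C i) = fx i.
Proof.
by rewrite /subst_xyz comp_mpolyXU -tnth_nth tnth_mktuple !split_lshift.
Qed.

Lemma subst_xyz_y fx fy fz i : subst_xyz fx fy fz (yv C i) = fy i.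
Proof.
by rewrite /subst_xyz comp_mpolyXU -tnth_nth tnth_mktuple split_lshift
  split_rshift.
Qed.

Lemma subst_xyz_z fx fy fz i : subst_xyz fx fy fz (zv C i) = fz i.
Proof.
by rewrite /subst_xyz comp_mpolyXU -tnth_nth tnth_mktuple split_rshift.
Qed.

Lemma subst_XY_X fX fY i : subst_XY fX fY (Xv C i) = fX i.
Proof.
by rewrite /subst_XY comp_mpolyXU -tnth_nth tnth_mktuple split_lshift.
Qed.

Lemma subst_XY_Y fX fY i : subst_XY fX fY (Yv C i) = fY i.
Proof.
by rewrite /subst_XY comp_mpolyXU -tnth_nth tnth_mktuple split_rshift.
Qed.

Lemma eq_subst_xyz fx fy fz gx gy gz :
  fx =1 gx -> fy =1 gy -> fz =1 gz -> subst_xyz fx fy fz =1 subst_xyz gx gy gz.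
Proof.
move=> ex ey ez p; congr (p \mPo _); apply: eq_from_tnth => j.
by rewrite !tnth_mktuple; case: (split j) => [j'|i] //; case: (split j').
Qed.

Lemma comp_subst_xyz l N (fx fy fz : 'I_n -> {mpoly C[l]})
    (u : l.-tuple {mpoly C[N]}) p :
  subst_xyz fx fy fz p \mPo u =
  subst_xyz (fun i => fx i \mPo u) (fun i => fy i \mPo u)
    (fun i => fz i \mPo u) p.
Proof.
rewrite /subst_xyz comp_mpolyA; congr (p \mPo _); apply: eq_from_tnth => j.
by rewrite !tnth_mktuple; case: (split j) => [j'|i] //; case: (split j').
Qed.

Lemma subst_xyz_comp (fx fy fz : 'I_n -> {mpoly C[n + n + n]}) gx gy gz p :
  subst_xyz gx gy gz (subst_xyz fx fy fz p) =
  subst_xyz (fun i => subst_xyz gx gy gz (fx i))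
    (fun i => subst_xyz gx gy gz (fy i)) (fun i => subst_xyz gx gy gz (fz i)) p.
Proof. exact: comp_subst_xyz. Qed.

Lemma subst_XY_comp (fx fy fz : 'I_n -> {mpoly C[n + n]}) fX fY p :
  subst_XY fX fY (subst_xyz fx fy fz p) =
  subst_xyz (fun i => subst_XY fX fY (fx i)) (fun i => subst_XY fX fY (fy i))
    (fun i => subst_XY fX fY (fz i)) p.
Proof. exact: comp_subst_xyz. Qed.

End Substitution.

Section Equivariance.
Variables (C : fieldType) (n r : nat) (zeta : C).
Hypothesis prim_zeta : r.-primitive_root zeta.

Lemma perm_actM (s t : 'S_n) (p : {mpoly C[n + n + n]}) :
  perm_act t (perm_act s p) = perm_act (s * t) p.
Proof.
rewrite [in LHS]/perm_act subst_xyz_comp.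
apply: eq_subst_xyz => i;
  by rewrite permM ?subst_xyz_x ?subst_xyz_y ?subst_xyz_z.
Qed.

Lemma phi_perm_act (s : 'S_n) (p : {mpoly C[n + n + n]}) :
  phi r (perm_act s p) = subst_xyz (fun i => Xv C (s i) ^+ r)
    (fun i => Yv C (s i) ^+ r) (fun i => Xv C (s i) * Yv C (s i)) p.
Proof.
rewrite [in LHS]/phi /perm_act subst_xyz_comp.
by apply: eq_subst_xyz => i; rewrite ?subst_xyz_x ?subst_xyz_y ?subst_xyz_z.
Qed.

Lemma wreath_act_phi (a : 'I_n -> 'I_r) s (p : {mpoly C[n + n + n]}) :
  wreath_act zeta a s (phi r p) = subst_xyz (fun i => Xv C (s i) ^+ r)
    (fun i => Yv C (s i) ^+ r) (fun i => Xv C (s i) * Yv C (s i)) p.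
Proof.
have zeta_r : zeta ^+ r = 1 := prim_expr_order prim_zeta.
have zeta_neq0 : zeta != 0.
  by rewrite (prim_root_eq0 prim_zeta) -lt0n (prim_order_gt0 prim_zeta).
rewrite [in LHS]/wreath_act /phi subst_XY_comp.
apply: eq_subst_xyz => i; rewrite ?rmorphXn ?rmorphM /=.
- by rewrite subst_XY_X exprZn -exprM mulnC exprM zeta_r expr1n scale1r.
- by rewrite subst_XY_Y exprZn -exprM mulnC exprM exprVn zeta_r invr1 expr1n
    scale1r.
- rewrite subst_XY_X subst_XY_Y -scalerAl -scalerAr scalerA -exprMn.
  by rewrite mulfV // expr1n scale1r.
Qed.

Lemma phi_equivariant (a : 'I_n -> 'I_r) s (p : {mpoly C[n + n + n]}) :
  phi r (perm_act s p) = wreath_act zeta a s (phi r p).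
Proof. by rewrite phi_perm_act wreath_act_phi. Qed.

End Equivariance.

Section Exponents.
Variables (n r : nat).
Local Open Scope nat_scope.
Local Notation lx i := (lshift n (lshift n i)).
Local Notation ly i := (lshift n (rshift n i)).
Local Notation lz i := (rshift (n + n) i).
Local Notation LX i := (lshift n i).
Local Notation LY i := (rshift n i).

Definition phi_mnm (m : 'X_{1..n + n + n}) : 'X_{1..n + n} :=
  [multinom match split j with
            | inl i => r * m (lx i) + m (lz i)
            | inr i => r * m (ly i) + m (lz i) end | j < n + n].

Definition lift_mnm (m : 'X_{1..n + n}) : 'X_{1..n + n + n} :=
  [multinom match split j with
            | inl j' => match split j' with
                        | inl i => (m (LX i) - m (LY i)) %/ r
                        | inr i => (m (LY i) - m (LX i)) %/ r end
            | inr i => minn (m (LX i)) (m (LY i)) end | j < n + n + n].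

Definition balanced (m : 'X_{1..n + n}) : Prop :=
  forall i, m (LX i) = m (LY i) %[mod r].

Lemma phi_mnmX m i : phi_mnm m (LX i) = r * m (lx i) + m (lz i).
Proof. by rewrite mnmE split_lshift. Qed.

Lemma phi_mnmY m i : phi_mnm m (LY i) = r * m (ly i) + m (lz i).
Proof. by rewrite mnmE split_rshift. Qed.

Lemma lift_mnm_x m i : lift_mnm m (lx i) = (m (LX i) - m (LY i)) %/ r.
Proof. by rewrite mnmE !split_lshift. Qed.

Lemma lift_mnm_y m i : lift_mnm m (ly i) = (m (LY i) - m (LX i)) %/ r.
Proof. by rewrite mnmE split_lshift split_rshift. Qed.

Lemma lift_mnm_z m i : lift_mnm m (lz i) = minn (m (LX i)) (m (LY i)).
Proof. by rewrite mnmE split_rshift. Qed.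

Lemma mul_divn_subD_min u v :
  u = v %[mod r] -> r * ((u - v) %/ r) + minn u v = u.
Proof.
case: (leqP v u) => [le_vu | lt_uv] e.
  by rewrite mulnC divnK ?subnK // -eqn_mod_dvd // e.
by rewrite (eqP (ltnW lt_uv)) div0n muln0.
Qed.

Lemma phi_lift_mnm m : balanced m -> phi_mnm (lift_mnm m) = m.
Proof.
move=> bal_m; apply/mnmP => j; rewrite -(splitK j).
case: (split j) => i /=.
  by rewrite phi_mnmX lift_mnm_x lift_mnm_z mul_divn_subD_min.
by rewrite phi_mnmY lift_mnm_y lift_mnm_z minnC mul_divn_subD_min.
Qed.

Hypothesis r_gt0 : (0 < r).

Lemma divn_subMDr a b c : ((r * a + c) - (r * b + c)) %/ r = a - b.
Proof. by rewrite subnDr -mulnBr mulKn. Qed.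

Lemma minn_MDr a b c : minn (r * a + c) (r * b + c) = r * minn a b + c.
Proof. by rewrite -addn_minl minnMr. Qed.

End Exponents.

Section Ideal.
Variables (C : fieldType) (n r : nat).
Local Notation lx i := (lshift n (lshift n i)).
Local Notation ly i := (lshift n (rshift n i)).
Local Notation lz i := (rshift (n + n) i).
Local Notation I := (@in_In C n r).
Implicit Types p q : {mpoly C[n + n + n]}.

Lemma in_In0 : I 0.
Proof. by exists (fun=> 0); rewrite big1 // => i _; rewrite mul0r. Qed.

Lemma in_InD p q : I p -> I q -> I (p + q).
Proof.
move=> [c ->] [c' ->]; exists (fun i => c i + c' i).
by rewrite -big_split; apply: eq_bigr => i _; rewrite mulrDl.
Qed.

Lemma in_InMl q p : I p -> I (q * p).
Proof.
move=> [c ->]; exists (fun i => q * c i).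
by rewrite mulr_sumr; apply: eq_bigr => i _; rewrite mulrA.
Qed.

Lemma in_In_sum T (s : seq T) (P : pred T) (F : T -> {mpoly C[n + n + n]}) :
  (forall t, P t -> I (F t)) -> I (\sum_(t <- s | P t) F t).
Proof.
move=> IF; elim/big_rec: _ => [|t p Pt Ip]; first exact: in_In0.
exact: in_InD (IF t Pt) Ip.
Qed.

Lemma in_In_gen i : I (xv C i * yv C i - zv C i ^+ r).
Proof.
exists (fun j => (j == i)%:R); rewrite (bigD1 i) //= eqxx mul1r big1 ?addr0 //.
by move=> j /negbTE ->; rewrite mul0r.
Qed.

Lemma in_In_prodB (F G : 'I_n -> {mpoly C[n + n + n]}) :
  (forall i, I (F i - G i)) -> I (\prod_i F i - \prod_i G i).
Proof.
move=> IFG.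
apply: (big_ind2 (fun a b => I (a - b))) => [|a1 b1 a2 b2 I1 I2 | i _].
- by rewrite subrr; exact: in_In0.
- have -> : a1 * a2 - b1 * b2 = a2 * (a1 - b1) + b1 * (a2 - b2) by ring.
  by apply: in_InD; apply: in_InMl.
- exact: IFG.
Qed.

Lemma in_In_expB i k : I ((xv C i * yv C i) ^+ k - (zv C i ^+ r) ^+ k).
Proof. by rewrite subrXX mulrC; apply/in_InMl/in_In_gen. Qed.

Lemma in_In_reduce i a b c :
  I (xv C i ^+ a * yv C i ^+ b * zv C i ^+ c -
     xv C i ^+ (a - b) * yv C i ^+ (b - a) * zv C i ^+ (r * minn a b + c)).
Proof.
set x := xv C i; set y := yv C i; set z := zv C i.
case: (leqP b a) => [le_ba | lt_ab].
- rewrite (eqP le_ba) expr0 mulr1.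
  have -> : x ^+ a * y ^+ b * z ^+ c - x ^+ (a - b) * z ^+ (r * b + c) =
            x ^+ (a - b) * z ^+ c * ((x * y) ^+ b - (z ^+ r) ^+ b).
    by rewrite -{1}(subnK le_ba) exprD exprMn -exprM exprD; ring.
  exact/in_InMl/in_In_expB.
- rewrite (eqP (ltnW lt_ab)) expr0 mul1r.
  have -> : x ^+ a * y ^+ b * z ^+ c - y ^+ (b - a) * z ^+ (r * a + c) =
            y ^+ (b - a) * z ^+ c * ((x * y) ^+ a - (z ^+ r) ^+ a).
    by rewrite -{1}(subnK (ltnW lt_ab)) exprD exprMn -exprM exprD; ring.
  exact/in_InMl/in_In_expB.
Qed.

Lemma phi_xv (i : 'I_n) : phi r (xv C i) = Xv C i ^+ r.
Proof. exact: subst_xyz_x. Qed.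

Lemma phi_yv (i : 'I_n) : phi r (yv C i) = Yv C i ^+ r.
Proof. exact: subst_xyz_y. Qed.

Lemma phi_zv (i : 'I_n) : phi r (zv C i) = Xv C i * Yv C i.
Proof. exact: subst_xyz_z. Qed.

Lemma phi_in_In p : I p -> phi r p = 0.
Proof.
case=> c ->; rewrite raddf_sum /= big1 // => i _.
by rewrite rmorphM rmorphB !rmorphM rmorphXn /= phi_xv phi_yv phi_zv exprMn
  subrr mulr0.
Qed.

Lemma phi_mpolyX (m : 'X_{1..n + n + n}) :
  phi r 'X_[m] = 'X_[phi_mnm r m] :> {mpoly C[n + n]}.
Proof.
rewrite mpolyX_xyz mpolyX_XY rmorph_prod; apply: eq_bigr => i _.
rewrite !rmorphM !rmorphXn /= phi_xv phi_yv phi_zv.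
by rewrite phi_mnmX phi_mnmY !exprD !exprM exprMn; ring.
Qed.

Hypothesis r_gt0 : (0 < r)%N.

Lemma in_In_mpolyX_lift m : I ('X_[m] - 'X_[lift_mnm r (phi_mnm r m)]).
Proof.
rewrite mpolyX_xyz [X in _ - X]mpolyX_xyz; apply: in_In_prodB => i.
rewrite lift_mnm_x lift_mnm_y lift_mnm_z !phi_mnmX !phi_mnmY.
by rewrite !divn_subMDr // minn_MDr; apply: in_In_reduce.
Qed.

End Ideal.

Section Lift.
Variables (C : fieldType) (n r : nat).
(* Summing over msupp q would not be linear in q; a degree bound d is, and
   lift_mpoly d is exact on monomials of degree < d. *)
Definition lift_mpoly d (q : {mpoly C[n + n]}) : {mpoly C[n + n + n]} :=
  \sum_(m : 'X_{1..(n + n) < d}) q@_m *: 'X_[lift_mnm r m].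

Fact lift_mpoly_is_semilinear d : semilinear (lift_mpoly d).
Proof.
split=> [c q | p q]; rewrite /lift_mpoly ?scaler_sumr -?big_split.
  by apply: eq_bigr => m _; rewrite mcoeffZ scalerA.
by apply: eq_bigr => m _; rewrite mcoeffD scalerDl.
Qed.

HB.instance Definition _ d :=
  GRing.isSemilinear.Build C {mpoly C[n + n]} {mpoly C[n + n + n]} _
    (lift_mpoly d) (lift_mpoly_is_semilinear d).

Lemma lift_mpolyX d (m : 'X_{1..n + n}) :
  (mdeg m < d)%N -> lift_mpoly d 'X_[m] = 'X_[lift_mnm r m].
Proof.
move=> m_lt_d; rewrite /lift_mpoly (bigD1 (BMultinom m_lt_d)) //= mcoeffX eqxx.
rewrite scale1r big1 ?addr0 // => m' ne_m'; rewrite mcoeffX.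
by case: eqP => [e | _]; [case/eqP: ne_m'; apply: val_inj | rewrite scale0r].
Qed.

Lemma phi_lift_mpoly (q : {mpoly C[n + n]}) :
  (forall m, m \in msupp q -> balanced r m) ->
  phi r (lift_mpoly (msize q) q) = q.
Proof.
move=> bal_q; rewrite /lift_mpoly raddf_sum /=.
rewrite [RHS](mpolywE (leqnn (msize q))).
apply: eq_bigr => m _; rewrite linearZ /= phi_mpolyX.
have [m_q | /memN_msupp_eq0 ->] := boolP (val m \in msupp q).
  by rewrite phi_lift_mnm //; apply: bal_q.
by rewrite !scale0r.
Qed.

Hypothesis r_gt0 : (0 < r)%N.

Lemma in_In_of_phi_eq0 (p : {mpoly C[n + n + n]}) : phi r p = 0 -> in_In r p.
Proof.
move=> phi_p0.
pose d := (\max_(m <- msupp p) (mdeg (phi_mnm r m)).+1)%N.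
have lift_phi : lift_mpoly d (phi r p) =
    \sum_(m <- msupp p) p@_m *: 'X_[lift_mnm r (phi_mnm r m)].
  rewrite {1}[p]mpolyE (raddf_sum (phi r)) raddf_sum /= !big_seq.
  apply: eq_bigr => m m_p.
  rewrite !linearZ /= phi_mpolyX lift_mpolyX //.
  exact: (@leq_bigmax_seq _ _ xpredT (fun m => (mdeg (phi_mnm r m)).+1)%N).
rewrite phi_p0 raddf0 in lift_phi.
rewrite -[p]subr0 lift_phi {1}[p]mpolyE -sumrB; apply: in_In_sum => m _.
by rewrite -scalerBr -mul_mpolyC; apply/in_InMl/in_In_mpolyX_lift.
Qed.

End Lift.

Section Torus.
Variables (C : fieldType) (n r : nat) (zeta : C).
Local Notation LX i := (lshift n i).
Local Notation LY i := (rshift n i).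

Definition torus_char (a : 'I_n -> 'I_r) (m : 'X_{1..n + n}) : C :=
  \prod_i ((zeta ^+ a i) ^+ m (LX i) * (zeta^-1 ^+ a i) ^+ m (LY i)).

Lemma wreath_act1_mpolyX (a : 'I_n -> 'I_r) (m : 'X_{1..n + n}) :
  wreath_act zeta a 1 'X_[m] = torus_char a m *: 'X_[m].
Proof.
rewrite mpolyX_XY rmorph_prod /torus_char -scaler_prod; apply: eq_bigr => i _.
rewrite rmorphM !rmorphXn /= /wreath_act subst_XY_X subst_XY_Y !perm1.
by rewrite !exprZn -scalerAl -scalerAr scalerA.
Qed.

Lemma mcoeff_wreath_act1 (a : 'I_n -> 'I_r) (q : {mpoly C[n + n]}) m :
  (wreath_act zeta a 1 q)@_m = torus_char a m * q@_m.
Proof.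
rewrite [q]mpolyE (raddf_sum (wreath_act zeta a 1)) !raddf_sum mulr_sumr.
apply: eq_bigr => m' _; rewrite /= linearZ /= wreath_act1_mpolyX scalerA.
rewrite !mcoeffZ mcoeffX.
by case: eqP => [-> | _]; rewrite ?mulr0 ?mulr1 // mulrC.
Qed.

Hypothesis prim_zeta : r.-primitive_root zeta.

Lemma balanced_of_wreath_invariant (q : {mpoly C[n + n]}) m :
  wreath_invariant r zeta q -> m \in msupp q -> balanced r m.
Proof.
move=> inv_q m_q i; have r_gt0 := prim_order_gt0 prim_zeta.
pose a j : 'I_r := if j == i then Ordinal (ltn_pmod 1 r_gt0) else Ordinal r_gt0.
have char_a : torus_char a m = zeta ^+ m (LX i) / zeta ^+ m (LY i).
  rewrite /torus_char (bigD1 i) //= big1 => [|j /negbTE ne_ji]; last first.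
    by rewrite /a ne_ji !expr0 !expr1n mulr1.
  by rewrite /a eqxx /= exprVn (prim_expr_mod prim_zeta) expr1 mulr1 exprVn.
have q_m : q@_m != 0 by rewrite mcoeff_eq0 negbK.
have := mcoeff_wreath_act1 a q m; rewrite inv_q char_a => e.
have /divr1_eq/eqP : zeta ^+ m (LX i) / zeta ^+ m (LY i) = 1.
  by apply: (mulIf q_m); rewrite mul1r -e.
by rewrite (eq_prim_root_expr prim_zeta) => /eqP.
Qed.

End Torus.

Section Symmetrization.
Variables (C : numFieldType) (n : nat).

Definition symmetrize (p : {mpoly C[n + n + n]}) : {mpoly C[n + n + n]} :=
  (n`!%:R)^-1 *: \sum_(s : 'S_n) perm_act s p.

Lemma symmetrize_invariant p : Sn_invariant (symmetrize p).
Proof.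
move=> t; rewrite /symmetrize linearZ /= (raddf_sum (perm_act t)) /=.
congr (_ *: _); under eq_bigr do rewrite perm_actM.
by rewrite [RHS](reindex_inj (mulIg t)).
Qed.

Lemma phi_symmetrize r p :
  (forall s, phi r (perm_act s p) = phi r p) -> phi r (symmetrize p) = phi r p.
Proof.
move=> phi_inv; rewrite /symmetrize linearZ /= (raddf_sum (phi r)) /=.
under eq_bigr do rewrite phi_inv.
rewrite sumr_const card_Sn -scaler_nat scalerA mulVf ?scale1r //.
by rewrite pnatr_eq0 -lt0n fact_gt0.
Qed.

End Symmetrization.

Theorem proposition1 (C : numClosedFieldType) (r n : nat)
  (hr : (1 <= r)%N) (hn : (1 <= n)%N) (zeta : C)
  (hzeta : r.-primitive_root zeta) :
  (forall p : {mpoly C[n + n + n]}, Sn_invariant p ->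
     wreath_invariant r zeta (phi r p)) /\
  (forall p : {mpoly C[n + n + n]}, Sn_invariant p ->
     (phi r p = 0 <-> in_In r p)) /\
  (forall q : {mpoly C[n + n]}, wreath_invariant r zeta q ->
     exists2 p : {mpoly C[n + n + n]}, Sn_invariant p & phi r p = q).
Proof.
split; [|split].
- by move=> p inv_p a s; rewrite -(phi_equivariant hzeta) inv_p.
- by move=> p _; split; [exact: in_In_of_phi_eq0 | exact: phi_in_In].
- move=> q inv_q; set p := lift_mpoly r (msize q) q.
  have phi_p : phi r p = q.
    apply: phi_lift_mpoly => m.
    exact: (balanced_of_wreath_invariant hzeta inv_q).
  exists (symmetrize p); first exact: symmetrize_invariant.
  rewrite phi_symmetrize // => s.
  by rewrite (phi_equivariant hzeta (fun=> Ordinal hr)) phi_p inv_q.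
Qed.
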